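(* Let $0<r<1$ and let $(T_1,\dots,T_d)$ be a doubly commuting tuple of operators in $C_{1,r}$ acting on a Hilbert space $\mathcal H$. Then there exists a decomposition of $\mathcal H$ into an orthogonal sum of $2^d$ closed subspaces $\mathcal H_1,\dots,\mathcal H_{2^d}$ such that: (1) every $\mathcal H_j$, $1\le j\le 2^d$, is a joint reducing subspace for $T_1,\dots,T_d$; (2) $T_i|_{\mathcal H_j}$ is either in $\mathcal C_{1,r}$ or a c.n.u. $C_{1,r}$-contraction for $1\le i\le d$, $1\le j\le 2^d$; (3) if $\Omega_d$ is the collection of all functions $\omega:\{1,\dots,d\}\to\{t_1,t_2\}$, then corresponding to every $\omega\in\Omega_d$ there is a unique subspace $\mathcal H_\ell$ ($1\le\ell\le 2^d$) such that for each $1\le j\le d$ the operator $T_j|_{\mathcal H_\ell}$ is of type $\omega(j)$; (4) $\mathcal H_1$ is the maximal joint reducing subspace for $T_1,\dots,T_d$ such that $T_1|_{\mathcal H_1},\dots,T_d|_{\mathcal H_1}$ are in $\mathcal C_{1,r}$; (5) $\mathcal H_{2^d}$ is the maximal joint reducing subspace for $T_1,\dots,T_d$ such that $T_1|_{\mathcal H_{2^d}},\dots,T_d|_{\mathcal H_{2^d}}$ are c.n.u. $C_{1,r}$-contractions. The decomposition is uniquely determined. One or more of the $\mathcal H_j$ may be $\{0\}$.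
   Context: $C_{1,r}=\{T: T\text{ invertible},\ \|T\|\le1,\ \|rT^{-1}\|\le1\}$. $\mathcal C_{1,r}$ is the class of operators $J$ on a Hilbert space $\mathcal L$ for which there exist orthogonal projections $P_0,P_1$ on $\mathcal L$ with $P_0+P_1=I_{\mathcal L}$ and $J^*J=P_0+r^2P_1$. An operator $T\in C_{1,r}$ on $\mathcal H$ is a c.n.u. $C_{1,r}$-contraction if $\mathcal H$ has no non-zero closed subspace that reduces $T$ to an operator in $\mathcal C_{1,r}$. An operator in $C_{1,r}$ is of type $t_1$ if it is in $\mathcal C_{1,r}$ and of type $t_2$ if it is a c.n.u. $C_{1,r}$-contraction. A tuple is doubly commuting if $T_iT_j=T_jT_i$ for all $i,j$ and $T_iT_j^*=T_j^*T_i$ for $i\ne j$. *)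

From mathcomp Require Import all_boot all_algebra.
From mathcomp Require Import reals complex.
Import GRing.Theory Num.Theory.
Set Implicit Arguments.
Unset Strict Implicit.
Unset Printing Implicit Defensive.
Local Open Scope ring_scope.

Section Hilbert.
Variables (R : realType) (V : lmodType R[i]) (ip : V -> V -> R[i]).

Definition hnorm (x : V) : R := Num.sqrt (complex.Re (ip x x)).

Definition hcauchy (u : nat -> V) : Prop :=
  forall e : R, 0 < e -> exists N : nat,
    forall m n : nat, (N <= m)%N -> (N <= n)%N -> hnorm (u m - u n) < e.

Definition hconverges (u : nat -> V) (l : V) : Prop :=
  forall e : R, 0 < e -> exists N : nat,
    forall n : nat, (N <= n)%N -> hnorm (u n - l) < e.

Definition is_hilbert : Prop :=
  [/\ (forall (a : R[i]) (x y z : V), ip (a *: x + y) z = a * ip x z + ip y z),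
      (forall x y : V, ip y x = ((ip x y)^*)%C),
      (forall x : V, 0 <= ip x x),
      (forall x : V, ip x x = 0 -> x = 0) &
      (forall u : nat -> V, hcauchy u -> exists l : V, hconverges u l)].

Definition closed_subspace (M : V -> Prop) : Prop :=
  [/\ M 0,
      (forall (a : R[i]) (x y : V), M x -> M y -> M (a *: x + y)) &
      (forall (u : nat -> V) (l : V), (forall n, M (u n)) -> hconverges u l -> M l)].

Definition subset_of (N M : V -> Prop) : Prop := forall x, N x -> M x.

Definition nonzero_subspace (M : V -> Prop) : Prop := exists x, M x /\ x <> 0.

Definition adjoint_of (T S : V -> V) : Prop := forall x y, ip (T x) y = ip x (S y).

Definition reduces (M : V -> Prop) (T Ts : V -> V) : Prop :=
  forall x, M x -> M (T x) /\ M (Ts x).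

(* --- properties of the restriction T|_M of T to a (reducing) closed
       subspace M, viewed as an operator on the Hilbert space M --- *)

Definition maps_into (M : V -> Prop) (T : V -> V) : Prop := forall x, M x -> M (T x).

Definition linear_on (M : V -> Prop) (P : V -> V) : Prop :=
  forall (a : R[i]) x y, M x -> M y -> P (a *: x + y) = a *: P x + P y.

Definition orth_proj_on (M : V -> Prop) (P : V -> V) : Prop :=
  [/\ maps_into M P, linear_on M P,
      (forall x, M x -> P (P x) = P x) &
      (forall x y, M x -> M y -> ip (P x) y = ip x (P y))].

Definition in_C1r_on (r : R) (M : V -> Prop) (T : V -> V) : Prop :=
  [/\ maps_into M T,
      (forall x, M x -> hnorm (T x) <= hnorm x) &
      exists S : V -> V,
        [/\ maps_into M S,
            (forall x, M x -> S (T x) = x),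
            (forall x, M x -> T (S x) = x) &
            (forall x, M x -> hnorm ((r%:C)%C *: S x) <= hnorm x)]].

(* T|_M belongs to the class \mathcal C_{1,r}: there are orthogonal projections
   P0, P1 on M with P0 + P1 = I_M and (T|_M)^* (T|_M) = P0 + r^2 P1
   (the last identity written out weakly: <T x, T y> = <(P0 + r^2 P1) x, y>) *)
Definition in_CC1r_on (r : R) (M : V -> Prop) (T : V -> V) : Prop :=
  maps_into M T /\
  exists P0 P1 : V -> V,
    [/\ orth_proj_on M P0, orth_proj_on M P1,
        (forall x, M x -> P0 x + P1 x = x) &
        (forall x y, M x -> M y ->
           ip (T x) (T y) = ip (P0 x + ((r ^+ 2)%:C)%C *: P1 x) y)].

(* T|_M is a c.n.u. C_{1,r}-contraction: it is in C_{1,r} and no nonzero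
   closed subspace of M reduces T|_M to an operator in \mathcal C_{1,r}
   (for M reducing T, (T|_M)^* = T^*|_M, so reducing T|_M inside M is the
   same as reducing T). *)
Definition cnu_on (r : R) (M : V -> Prop) (T Ts : V -> V) : Prop :=
  in_C1r_on r M T /\
  ~ (exists N : V -> Prop,
       [/\ closed_subspace N, subset_of N M, nonzero_subspace N,
           reduces N T Ts & in_CC1r_on r N T]).

(* type t1 (encoded by true) / type t2 (encoded by false) *)
Definition of_type (r : R) (t : bool) (M : V -> Prop) (T Ts : V -> V) : Prop :=
  if t then in_C1r_on r M T /\ in_CC1r_on r M T else cnu_on r M T Ts.

Definition orth_decomposition (I : finType) (Hs : I -> V -> Prop) : Prop :=
  [/\ (forall j, closed_subspace (Hs j)),
      (forall j k x y, j != k -> Hs j x -> Hs k y -> ip x y = 0) &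
      (forall x, exists f : I -> V, (forall j, Hs j (f j)) /\ x = \sum_(j : I) f j)].

End Hilbert.

(* the indices 1 and 2^d of {1,..,2^d}, as elements of 'I_(2^d) *)
Lemma exp2_gt0 (d : nat) : (0 < 2 ^ d)%N.
Proof. by rewrite expn_gt0. Qed.

Lemma exp2_pred_lt (d : nat) : ((2 ^ d).-1 < 2 ^ d)%N.
Proof. by rewrite prednK ?exp2_gt0. Qed.

Definition first_idx (d : nat) : 'I_(2 ^ d) := Ordinal (exp2_gt0 d).
Definition last_idx (d : nat) : 'I_(2 ^ d) := Ordinal (exp2_pred_lt d).

(* For one operator T with adjoint T*, put B = T*T.  On a reducing subspace, T
   lies in \mathcal C_{1,r} exactly when (B - 1)(B - r^2) vanishes there, the two
   spectral projections of B being the required P0 and P1.  Hence the largest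
   such subspace is H(T) = {x | (B - 1)(B - r^2) w x = 0 for every word w in
   T, T*}: it is closed (an orthogonal complement) and reducing, T is c.n.u. on
   every reducing subspace orthogonal to it, and conversely a reducing subspace
   on which T is c.n.u. is orthogonal to H(T), since the orthogonal projection
   onto it commutes with T and T*, hence maps H(T) into a \mathcal C_{1,r} part.
   Double commutativity makes the projection onto each H(T_k) preserve every
   H(T_i) and H(T_i)^perp, so splitting off one index at a time decomposes the
   space into the 2^d intersections of the H(T_i) or H(T_i)^perp.  Uniqueness
   holds because each piece of any decomposition of the stated kind lies in the
   corresponding intersection, and the intersections are mutually orthogonal. *)

From HB Require Import structures.
From mathcomp Require Import all_boot all_order all_algebra.
From mathcomp Require Import reals complex.
From mathcomp Require Import ring lra.
From mathcomp Require Import fingroup perm.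
From mathcomp Require boolp.
Import Order.TTheory GRing.Theory Num.Theory.
Set Implicit Arguments.
Unset Strict Implicit.
Unset Printing Implicit Defensive.
Local Open Scope ring_scope.

Section ComplexFacts.
Variable R : realType.
Implicit Types (z : R[i]) (t : R).

Lemma ReJ z : complex.Re (z^*)%C = complex.Re z.
Proof. by case: z. Qed.

Lemma Re_realM t z : complex.Re (t%:C * z)%C = t * complex.Re z.
Proof. by case: z => a b; simpc. Qed.

Lemma complex_eq0 z : (forall u : R[i], complex.Re (u * z) <= 0) -> z = 0.
Proof.
case: z => a b h; have := h 1; have := h (-1); have := h (- 'i%C); have := h 'i%C.
simpc => /= ? ? ? ?; apply/eqP; rewrite eq_complex /=; apply/andP; split; apply/eqP; lra.
Qed.

End ComplexFacts.

Lemma le0_of_le_eps_mul (R : realFieldType) (r K : R) : 0 <= K ->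
  (forall e, 0 < e -> e <= 1 -> r <= e * K) -> r <= 0.
Proof.
move=> K_ge0 r_small; rewrite leNgt; apply/negP => r_gt0.
have d_gt0 : 0 < r + K + 1 by lra.
have := r_small (r / (r + K + 1)).
rewrite divr_gt0 // ?ler_pdivrMr // mul1r.
have -> : r / (r + K + 1) * K = (r * K) / (r + K + 1) by rewrite mulrAC.
rewrite ler_pdivlMr //; move=> /(_ isT); nra.
Qed.

Lemma archi_inv_lt (R : archiRealFieldType) (e : R) : 0 < e ->
  exists N : nat, forall n, (N <= n)%N -> (n.+1%:R)^-1 < e.
Proof.
move=> e0; exists (Num.truncn e^-1) => n hn.
rewrite -[e]invrK ltf_pV2 ?posrE ?invr_gt0 ?ltr0Sn //.
apply: (lt_le_trans (truncnS_gt _)); by rewrite ler_nat ltnS.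
Qed.

Section InnerProduct.
Variables (R : realType) (V : lmodType R[i]) (ip : V -> V -> R[i]).
Hypothesis ipH : is_hilbert ip.
Implicit Types (x y z u v : V) (a : R[i]).

Lemma ipDZl a x y z : ip (a *: x + y) z = a * ip x z + ip y z.
Proof. by case: ipH. Qed.

Lemma ipC x y : ip y x = (ip x y)^*%C.
Proof. by case: ipH. Qed.

Lemma ip_ge0 x : 0 <= ip x x.
Proof. by case: ipH. Qed.

Lemma ip_eq0 x : ip x x = 0 -> x = 0.
Proof. by case: ipH => _ _ _ /(_ x). Qed.

Lemma ipDl x y z : ip (x + y) z = ip x z + ip y z.
Proof. by rewrite -[x]scale1r ipDZl mul1r scale1r. Qed.

Lemma ip0l z : ip 0 z = 0.
Proof. by apply: (addrI (ip 0 z)); rewrite -ipDl !addr0. Qed.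

Lemma ipZl a x z : ip (a *: x) z = a * ip x z.
Proof. by rewrite -[a *: x]addr0 ipDZl ip0l addr0. Qed.

Lemma ipNl x z : ip (- x) z = - ip x z.
Proof. by rewrite -scaleN1r ipZl mulN1r. Qed.

Lemma ipBl x y z : ip (x - y) z = ip x z - ip y z.
Proof. by rewrite ipDl ipNl. Qed.

Lemma ipDr x y z : ip z (x + y) = ip z x + ip z y.
Proof. by rewrite ipC ipDl rmorphD /= -!ipC. Qed.

Lemma ipZr a x z : ip z (a *: x) = a^*%C * ip z x.
Proof. by rewrite ipC ipZl rmorphM /= -ipC. Qed.

Lemma ip0r z : ip z 0 = 0.
Proof. by rewrite ipC ip0l rmorph0. Qed.

Lemma ipNr x z : ip z (- x) = - ip z x.
Proof. by rewrite ipC ipNl rmorphN /= -ipC. Qed.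

Lemma ipBr x y z : ip z (x - y) = ip z x - ip z y.
Proof. by rewrite ipDr ipNr. Qed.

Lemma ip_sum (I : finType) (P : pred I) (F : I -> V) z :
  ip (\sum_(i | P i) F i) z = \sum_(i | P i) ip (F i) z.
Proof. by apply: (big_morph (ip^~ z)) => [u v|]; [exact: ipDl | exact: ip0l]. Qed.

Lemma ip_eq0C x y : ip x y = 0 -> ip y x = 0.
Proof. by move=> h; rewrite ipC h rmorph0. Qed.

Lemma ip_inj_l u v : (forall z, ip u z = ip v z) -> u = v.
Proof.
move=> h; apply/eqP; rewrite -subr_eq0; apply/eqP/ip_eq0.
by rewrite ipBl h subrr.
Qed.

Lemma ip_inj_r u v : (forall z, ip z u = ip z v) -> u = v.
Proof.
move=> h; apply/eqP; rewrite -subr_eq0; apply/eqP/ip_eq0.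
by rewrite ipBr h subrr.
Qed.

Definition sqnorm x : R := complex.Re (ip x x).

Lemma sqnorm_ge0 x : 0 <= sqnorm x.
Proof. by have := ip_ge0 x; rewrite lecE => /andP[]. Qed.

Lemma Re_ipC x y : complex.Re (ip y x) = complex.Re (ip x y).
Proof. by rewrite ipC ReJ. Qed.

Lemma sqnormD x y : sqnorm (x + y) = sqnorm x + sqnorm y + 2 * complex.Re (ip x y).
Proof. by rewrite /sqnorm ipDl !ipDr !raddfD /= (Re_ipC x y); ring. Qed.

Lemma sqnormN x : sqnorm (- x) = sqnorm x.
Proof. by rewrite /sqnorm ipNl ipNr opprK. Qed.

Lemma sqnormB x y : sqnorm (x - y) = sqnorm x + sqnorm y - 2 * complex.Re (ip x y).
Proof. by rewrite sqnormD sqnormN ipNr raddfN /=; ring. Qed.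

Lemma sqnormZ (t : R) x : sqnorm (t%:C%C *: x) = t ^+ 2 * sqnorm x.
Proof. by rewrite /sqnorm ipZl ipZr conjc_real mulrA -rmorphM Re_realM. Qed.

Lemma parallelogram x y :
  sqnorm (x + y) + sqnorm (x - y) = 2 * sqnorm x + 2 * sqnorm y.
Proof. by rewrite sqnormD sqnormB; ring. Qed.

Lemma Re_ip_le (t : R) x y : 0 < t ->
  2 * complex.Re (ip x y) <= t * sqnorm x + sqnorm y / t.
Proof.
move=> t_gt0; have := sqnorm_ge0 (t%:C%C *: x - y).
rewrite sqnormB sqnormZ ipZl Re_realM => h.
rewrite -(ler_pM2l t_gt0) mulrDr [t * (_ / t)]mulrC divfK ?gt_eqF //; nra.
Qed.

Lemma sqnorm_lt_hnorm x e : 0 < e -> hnorm ip x < e -> sqnorm x < e ^+ 2.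
Proof.
move=> e_gt0 h; rewrite -(sqr_sqrtr (sqnorm_ge0 x)).
by rewrite ltr_pXn2r // nnegrE ?sqrtr_ge0 ?ltW.
Qed.

Lemma hnorm_lt_sqnorm x e : 0 < e -> sqnorm x < e ^+ 2 -> hnorm ip x < e.
Proof.
move=> e_gt0 h; rewrite /hnorm -(ger0_norm (ltW e_gt0)) -sqrtr_sqr.
by rewrite ltr_sqrt // exprn_gt0.
Qed.

Lemma adjoint_linear (F G : V -> V) : adjoint_of ip F G -> linear F.
Proof.
by move=> adj a x y; apply: ip_inj_l => z; rewrite adj ipDZl ipDl ipZl !adj.
Qed.

Lemma adjointC (F G : V -> V) : adjoint_of ip F G -> adjoint_of ip G F.
Proof. by move=> adj x y; rewrite ipC -adj -ipC. Qed.

Lemma adjoint_comm (F F' G G' : V -> V) :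
  adjoint_of ip F F' -> adjoint_of ip G G' -> (forall x, F (G x) = G (F x)) ->
  forall x, F' (G' x) = G' (F' x).
Proof. by move=> adjF adjG FG x; apply: ip_inj_r => z; rewrite -adjF -adjG -adjG -adjF FG. Qed.

End InnerProduct.

(* Identities between vectors built with [+], [-] and [*:] are checked by pairing
   both sides with an arbitrary vector, which turns them into identities in R[i]. *)
Ltac ip_ring ipH :=
  apply: (ip_inj_l ipH) => ?;
  rewrite ?(ipDl ipH, ipBl ipH, ipZl ipH, ipNl ipH, ip0l ipH);
  first [ring | field].

Section ClosedSubspaces.
Variables (R : realType) (V : lmodType R[i]) (ip : V -> V -> R[i]).
Hypothesis ipH : is_hilbert ip.
Implicit Types (M N Z : V -> Prop) (x y z : V).
Local Notation sqnorm := (sqnorm ip).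

Section Closure.
Variables (M : V -> Prop) (HM : closed_subspace ip M).

Lemma subspace0 : M 0.
Proof. by case: HM. Qed.

Lemma subspaceD x y : M x -> M y -> M (x + y).
Proof. by case: HM => _ h _ mx my; rewrite -[x]scale1r; apply: h. Qed.

Lemma subspaceZ a x : M x -> M (a *: x).
Proof. by case: HM => _ h _ mx; rewrite -[_ *: _]addr0; apply: h => //; apply: subspace0. Qed.

Lemma subspaceB x y : M x -> M y -> M (x - y).
Proof. by move=> mx my; rewrite -scaleN1r; apply: subspaceD => //; apply: subspaceZ. Qed.

End Closure.

Lemma closed_subspace_ext M N : (forall x, M x <-> N x) ->
  closed_subspace ip M -> closed_subspace ip N.
Proof.
move=> e [h0 h1 h2]; split.
- exact/e.
- by move=> a x y /e hx /e hy; apply/e; apply: h1.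
- by move=> u l hu hl; apply/e; apply: (h2 u) => // n; apply/e.
Qed.

Lemma closed_subspace_all (I : Type) (K : I -> V -> Prop) :
  (forall i, closed_subspace ip (K i)) -> closed_subspace ip (fun x => forall i, K i x).
Proof.
move=> hK; split.
- by move=> i; case: (hK i).
- by move=> a x y hx hy i; case: (hK i) => _ h _; apply: h.
- by move=> u l hu hl i; case: (hK i) => _ _ h; apply: (h u) => // n; apply: hu.
Qed.

Lemma closed_subspace_and M N : closed_subspace ip M -> closed_subspace ip N ->
  closed_subspace ip (fun x => M x /\ N x).
Proof.
move=> hM hN; apply: (closed_subspace_ext (M := fun x => forall b : bool, if b then M x else N x)).
  by move=> x; split=> [h|[? ?] []//]; split; [exact: (h true) | exact: (h false)].
by apply: closed_subspace_all => -[].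
Qed.

Definition orth Z : V -> Prop := fun x => forall z, Z z -> ip x z = 0.

Lemma orth_self Z z : Z z -> orth Z z -> z = 0.
Proof. by move=> Zz oz; apply: (ip_eq0 ipH); apply: oz. Qed.

Lemma ip_lim_eq0 (u : nat -> V) l z :
  hconverges ip u l -> (forall n, ip (u n) z = 0) -> ip l z = 0.
Proof.
move=> ul uz; apply: complex_eq0 => c; set w := (c^*%C *: z).
have -> : c * ip l z = ip l w by rewrite ipZr // conjcK.
have uw n : ip (u n) w = 0 by rewrite ipZr // uz mulr0.
apply: (@le0_of_le_eps_mul _ _ (1 + sqnorm w)); first by have := sqnorm_ge0 ipH w; lra.
move=> e e_gt0 e_le1; have [N /(_ N (leqnn N)) uN] := ul e e_gt0.
have {}uN : sqnorm (l - u N) < e ^+ 2.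
  by rewrite -(sqnormN ipH) opprB; apply: sqnorm_lt_hnorm.
have -> : complex.Re (ip l w) = complex.Re (ip (l - u N) w).
  by rewrite ipBl // uw subr0.
have einv_gt0 : 0 < e^-1 by rewrite invr_gt0.
have := Re_ip_le ipH (l - u N) w einv_gt0; rewrite invrK.
have : e^-1 * sqnorm (l - u N) <= e by rewrite ler_pdivrMl // -expr2 ltW.
have := sqnorm_ge0 ipH w; nra.
Qed.

Lemma orth_closed Z : closed_subspace ip (orth Z).
Proof.
split.
- by move=> z _; rewrite ip0l.
- by move=> a x y hx hy z Zz; rewrite ipDZl // hx // hy // mulr0 addr0.
- by move=> u l hu hl z Zz; apply: (ip_lim_eq0 hl) => n; apply: hu.
Qed.

Lemma reduces_orth M (F G : V -> V) : adjoint_of ip F G ->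
  reduces M F G -> reduces (orth M) F G.
Proof.
move=> adj red x ox; split => m Mm.
  by rewrite adj; apply: ox; case: (red _ Mm).
by rewrite (adjointC ipH adj); apply: ox; case: (red _ Mm).
Qed.

Lemma reduces_and M N (F G : V -> V) :
  reduces M F G -> reduces N F G -> reduces (fun x => M x /\ N x) F G.
Proof. by move=> redM redN x [/redM[? ?] /redN[? ?]]. Qed.

End ClosedSubspaces.

Section ClosestPoint.
Variables (R : realType) (V : lmodType R[i]) (ip : V -> V -> R[i]).
Hypothesis ipH : is_hilbert ip.
Variables (M : V -> Prop) (x : V).
Hypothesis HM : closed_subspace ip M.
Local Notation sqnorm := (sqnorm ip).

Lemma near_minimizers_close (del a b : R) m m' :
  (forall n, M n -> del <= sqnorm (x - n)) -> M m -> M m' ->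
  sqnorm (x - m) <= del + a -> sqnorm (x - m') <= del + b ->
  sqnorm (m - m') <= 2 * a + 2 * b.
Proof.
move=> del_le Mm Mm' hm hm'; set mid := (2^-1)%:C%C *: (m + m').
have Mmid : M mid by apply: (subspaceZ HM); apply: (subspaceD HM).
have sum_eq : x - m + (x - m') = 2%:C%C *: (x - mid).
  rewrite scalerBr scalerA -rmorphM mulfV ?pnatr_eq0 // scale1r.
  by rewrite [2%:C%C]rmorphD /= scalerDl scale1r addrACA -opprD.
have diff_eq : x - m - (x - m') = m' - m by rewrite opprB addrC addrA subrK.
have := parallelogram ipH (x - m) (x - m').
rewrite sum_eq diff_eq sqnormZ // -[sqnorm (m' - m)](sqnormN ipH) opprB expr2.
have := del_le _ Mmid; lra.
Qed.

Lemma minimizing_cauchy (del : R) (mm : nat -> V) :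
  (forall m, M m -> del <= sqnorm (x - m)) -> (forall n, M (mm n)) ->
  (forall n, sqnorm (x - mm n) < del + (n.+1%:R)^-1) -> hcauchy ip mm.
Proof.
move=> del_le Mmm mm_near e e_gt0.
have e4_gt0 : 0 < e ^+ 2 / 4 by rewrite divr_gt0 // exprn_gt0.
have [N HN] := archi_inv_lt e4_gt0; exists N => m n hm hn.
apply: hnorm_lt_sqnorm => //.
have := near_minimizers_close del_le (Mmm m) (Mmm n) (ltW (mm_near m)) (ltW (mm_near n)).
have e2E : e ^+ 2 = 4 * (e ^+ 2 / 4) by rewrite mulrC divfK ?pnatr_eq0.
rewrite e2E; have := HN m hm; have := HN n hn.
move: (e ^+ 2 / 4) (m.+1%:R^-1) (n.+1%:R^-1) => q a b; lra.
Qed.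

Lemma sqnorm_sub_lim_le (del : R) (mm : nat -> V) p : 0 <= del ->
  hconverges ip mm p -> (forall n, sqnorm (x - mm n) < del + (n.+1%:R)^-1) ->
  sqnorm (x - p) <= del.
Proof.
move=> del_ge0 mm_p mm_near; rewrite -subr_le0.
apply: (@le0_of_le_eps_mul _ _ (del + 4)); first lra.
move=> e e_gt0 e_le1.
have [N1 HN1] := mm_p e e_gt0; have [N2 HN2] := archi_inv_lt e_gt0.
pose n := maxn N1 N2.
have hb : sqnorm (mm n - p) < e ^+ 2.
  by apply: sqnorm_lt_hnorm => //; apply: HN1; rewrite leq_maxl.
have ha : sqnorm (x - mm n) < del + e.
  by apply: (lt_trans (mm_near n)); rewrite ltrD2l; apply: HN2; rewrite leq_maxr.
have -> : x - p = (x - mm n) + (mm n - p) by rewrite addrA subrK.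
rewrite sqnormD //; have := Re_ip_le ipH (x - mm n) (mm n - p) e_gt0.
have : sqnorm (mm n - p) / e < e by rewrite ltr_pdivrMr // -expr2.
have := sqnorm_ge0 ipH (x - mm n); have := sqnorm_ge0 ipH (mm n - p).
move: ha hb; rewrite expr2; nra.
Qed.

Lemma closest_point : exists2 p, M p & forall m, M m -> sqnorm (x - p) <= sqnorm (x - m).
Proof.
pose S y := exists2 m, M m & y = sqnorm (x - m).
have S0 : classical_sets.nonempty S.
  by exists (sqnorm (x - 0)), 0 => //; exact: (subspace0 HM).
have lbS : classical_sets.lbound S 0 by move=> y [m _ ->]; apply: sqnorm_ge0.
set del := inf S.
have del_ge0 : 0 <= del by apply: lb_le_inf.
have del_le m : M m -> del <= sqnorm (x - m).
  by move=> Mm; apply: ge_inf; [exists 0 | exists m].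
have near_inf n : exists m, M m /\ sqnorm (x - m) < del + (n.+1%:R)^-1.
  have : inf S < del + (n.+1%:R)^-1 by rewrite ltrDl invr_gt0 ltr0Sn.
  by case/(inf_lt S0) => y [m Mm ->]; exists m.
have [mm Hmm] := boolp.choice near_inf.
have Mmm n : M (mm n) by case: (Hmm n).
have mm_near n : sqnorm (x - mm n) < del + (n.+1%:R)^-1 by case: (Hmm n).
have [p mm_p] : exists p, hconverges ip mm p.
  by case: ipH => _ _ _ _; apply; apply: (minimizing_cauchy del_le Mmm mm_near).
exists p; first by case: HM => _ _; apply=> //; exact: mm_p.
by move=> m Mm; apply: le_trans (del_le _ Mm); apply: (sqnorm_sub_lim_le del_ge0 mm_p).
Qed.

Lemma closest_point_orth p : M p ->
  (forall m, M m -> sqnorm (x - p) <= sqnorm (x - m)) -> orth ip M (x - p).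
Proof.
move=> Mp p_min m Mm; apply: complex_eq0 => c; set m' := c^*%C *: m.
have -> : c * ip (x - p) m = ip (x - p) m' by rewrite ipZr // conjcK.
have Mm' : M m' by apply: (subspaceZ HM).
apply: (@le0_of_le_eps_mul _ _ (sqnorm m')); first exact: sqnorm_ge0.
move=> e e_gt0 e_le1.
have := p_min (p + e%:C%C *: m') (subspaceD HM Mp (subspaceZ HM _ Mm')).
rewrite opprD addrA (sqnormB ipH (x - p)) sqnormZ // ipZr // conjc_real Re_realM.
have := sqnorm_ge0 ipH m'; nra.
Qed.

End ClosestPoint.

Section OrthogonalProjection.
Variables (R : realType) (V : lmodType R[i]) (ip : V -> V -> R[i]).
Hypothesis ipH : is_hilbert ip.

Definition is_orth_proj (M : V -> Prop) (P : V -> V) :=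
  (forall x, M (P x)) /\ (forall x, orth ip M (x - P x)).

Lemma orth_proj_exists M : closed_subspace ip M -> exists P, is_orth_proj M P.
Proof.
move=> HM; have foot x : exists p, M p /\ orth ip M (x - p).
  have [p Mp p_min] := closest_point ipH x HM.
  by exists p; split; last exact: closest_point_orth.
by have [P HP] := boolp.choice foot; exists P; split => x; case: (HP x).
Qed.

Variables (M : V -> Prop) (P : V -> V).
Hypotheses (HM : closed_subspace ip M) (HP : is_orth_proj M P).

Lemma proj_in x : M (P x). Proof. by case: HP. Qed.

Lemma proj_orth x : orth ip M (x - P x). Proof. by case: HP. Qed.

Lemma proj_uniq x p : M p -> orth ip M (x - p) -> P x = p.
Proof.
move=> Mp op; apply/eqP; rewrite -subr_eq0; apply/eqP; apply: (orth_self ipH (Z := M)).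
  by apply: (subspaceB HM) => //; apply: proj_in.
move=> m Mm; have -> : P x - p = (x - p) - (x - P x) by rewrite opprB [RHS]addrC addrA subrK.
by rewrite ipBl // op // proj_orth // subrr.
Qed.

Lemma proj_id x : M x -> P x = x.
Proof. by move=> Mx; apply: proj_uniq => // m _; rewrite subrr ip0l. Qed.

Lemma proj_linear : linear P.
Proof.
move=> a x y; apply: proj_uniq.
  by apply: (subspaceD HM); [apply: (subspaceZ HM) |]; apply: proj_in.
move=> m Mm; have -> : a *: x + y - (a *: P x + P y) = a *: (x - P x) + (y - P y).
  by rewrite scalerBr opprD addrACA.
by rewrite ipDZl // !proj_orth // mulr0 addr0.
Qed.

Lemma proj_selfadj : adjoint_of ip P P.
Proof.
move=> x y; have -> : ip (P x) y = ip (P x) (P y).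
  rewrite -[y in LHS](subrK (P y)) ipDr //.
  by rewrite (ip_eq0C ipH (proj_orth y (proj_in x))) add0r.
rewrite -[x in RHS](subrK (P x)) ipDl //.
by rewrite (proj_orth x (proj_in y)) add0r.
Qed.

Lemma proj_comm (F G : V -> V) : adjoint_of ip F G -> reduces M F G ->
  forall x, P (F x) = F (P x).
Proof.
move=> adj red x; apply: proj_uniq; first by case: (red _ (proj_in x)).
move=> m Mm; rewrite -(zmod_morphism_linear (adjoint_linear ipH adj)) adj.
by apply: proj_orth; case: (red _ Mm).
Qed.

End OrthogonalProjection.

Section OrthDecomposition.
Variables (R : realType) (V : lmodType R[i]) (ip : V -> V -> R[i]).
Hypothesis ipH : is_hilbert ip.

Lemma orth_decomposition_reindex (I J : finType) (Hs : I -> V -> Prop) (f : J -> I) :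
  bijective f -> orth_decomposition ip Hs -> orth_decomposition ip (fun j => Hs (f j)).
Proof.
move=> f_bij [Hcl Horth Hdec]; split => [j|j k x y|x]; first exact: Hcl.
  by rewrite -(inj_eq (bij_inj f_bij)); apply: Horth.
have [g [g_in ->]] := Hdec x; exists (fun j => g (f j)); split => //.
by rewrite (reindex f) //; apply: onW_bij.
Qed.

Lemma orth_decomposition_sub (I : finType) (Ks Hs : I -> V -> Prop) :
  orth_decomposition ip Ks -> (forall j, closed_subspace ip (Hs j)) ->
  (forall j k x y, j != k -> Hs j x -> Hs k y -> ip x y = 0) ->
  (forall j, subset_of (Ks j) (Hs j)) -> forall j x, Hs j x -> Ks j x.
Proof.
move=> [_ _ Kdec] Hcl Horth KH j x x_H; have [f [f_K x_sum]] := Kdec x.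
have rest_sum : x - f j = \sum_(k | k != j) f k.
  by rewrite [in LHS]x_sum (bigD1 j) //= addrAC subrr add0r.
have rest_H : Hs j (x - f j) by apply: (subspaceB (Hcl j) x_H (KH _ _ (f_K j))).
have rest0 : x - f j = 0.
  apply: (ip_eq0 ipH); rewrite {1}rest_sum ip_sum // big1 // => k kj.
  exact: (Horth _ _ _ _ kj (KH _ _ (f_K k)) rest_H).
by move/eqP: rest0; rewrite subr_eq0 => /eqP ->.
Qed.

End OrthDecomposition.

Section C1rRestriction.
Variables (R : realType) (V : lmodType R[i]) (ip : V -> V -> R[i]).
Hypothesis ipH : is_hilbert ip.
Variables (r : R) (T Ts : V -> V).
Hypothesis Tadj : adjoint_of ip T Ts.

HB.instance Definition _ := GRing.isLinear.Build R[i] V V *:%R T (adjoint_linear ipH Tadj).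

(* The inverse [S] of [T] maps [M] into [M]: [T] sends the component of [S x]
   orthogonal to [M] both into [M] and into its orthogonal complement. *)
Lemma C1r_on_reducing M : in_C1r_on ip r (fun _ => True) T ->
  closed_subspace ip M -> reduces M T Ts -> in_C1r_on ip r M T.
Proof.
move=> [_ T_contr [S [_ ST TS rS_contr]]] HM red.
split; [by move=> x /red[] | by move=> x _; apply: T_contr |].
exists S; split => [x Mx|x _|x _|x _]; [| exact: ST | exact: TS | exact: rS_contr].
have [P HP] := orth_proj_exists ipH HM.
set q := S x - P (S x).
have Tq : T q = x - T (P (S x)) by rewrite linearB /= TS.
have Tq_M : M (T q) by rewrite Tq; apply: (subspaceB HM Mx); case: (red _ (proj_in HP (S x))).
have Tq_orth : orth ip M (T q) by move=> m /red[_ ?]; rewrite Tadj; apply: (proj_orth HP (S x)).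
have q0 : q = 0 by rewrite -(ST q I) (orth_self ipH Tq_M Tq_orth) -{1}(linear0 T) ST.
by move/eqP: q0; rewrite subr_eq0 => /eqP ->; apply: (proj_in HP (S x)).
Qed.

End C1rRestriction.

Section SingleOperator.
Variables (R : realType) (V : lmodType R[i]) (ip : V -> V -> R[i]).
Hypothesis ipH : is_hilbert ip.
Variables (r : R) (T Ts : V -> V).
Hypothesis r2_neq1 : r ^+ 2 != 1.
Hypothesis Tadj : adjoint_of ip T Ts.
Implicit Types (M N : V -> Prop) (x y : V).

HB.instance Definition _ := GRing.isLinear.Build R[i] V V *:%R T (adjoint_linear ipH Tadj).
HB.instance Definition _ :=
  GRing.isLinear.Build R[i] V V *:%R Ts (adjoint_linear ipH (adjointC ipH Tadj)).

Local Notation c2 := ((r ^+ 2)%:C%C : R[i]).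

Lemma one_sub_c2_neq0 : 1 - r%:C%C ^+ 2 != 0 :> R[i].
Proof. by rewrite -rmorphXn -rmorphB /= (inj_eq (@complexI R)) subr_eq0 eq_sym. Qed.

Definition letter (b : bool) : V -> V := if b then T else Ts.

Fixpoint word (s : seq bool) x : V := if s is b :: s' then word s' (letter b x) else x.

Fixpoint word_adj (s : seq bool) y : V :=
  if s is b :: s' then letter (~~ b) (word_adj s' y) else y.

Lemma word_adjoint s : adjoint_of ip (word s) (word_adj s).
Proof.
elim: s => [|b s IH] x y //=; rewrite IH.
by case: b; [exact: Tadj | exact: (adjointC ipH Tadj)].
Qed.

Lemma reduces_word M : reduces M T Ts -> forall s x, M x -> M (word s x).
Proof. by move=> red; elim=> [|[] s IH] x Mx //=; apply: IH; case: (red x Mx). Qed.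

Definition TsT x := Ts (T x).

Lemma TsT_selfadj : adjoint_of ip TsT TsT.
Proof. by move=> x y; rewrite /TsT (adjointC ipH Tadj) Tadj. Qed.

HB.instance Definition _ :=
  GRing.isLinear.Build R[i] V V *:%R TsT (adjoint_linear ipH TsT_selfadj).

(* [(T*T - 1)(T*T - r^2) x] *)
Definition cc_defect x := TsT (TsT x) - (1 + c2) *: TsT x + c2 *: x.

Lemma cc_defect_selfadj : adjoint_of ip cc_defect cc_defect.
Proof.
move=> x y; rewrite /cc_defect.
rewrite !(ipDl ipH, ipNl ipH, ipZl ipH, ipDr ipH, ipNr ipH, ipZr ipH) !TsT_selfadj.
by rewrite rmorphD /= !oppr0.
Qed.

HB.instance Definition _ :=
  GRing.isLinear.Build R[i] V V *:%R cc_defect (adjoint_linear ipH cc_defect_selfadj).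

Definition cc_part x := forall s, cc_defect (word s x) = 0.

Lemma cc_part_closed : closed_subspace ip cc_part.
Proof.
pose Z z := exists s y, z = word_adj s (cc_defect y).
apply: (closed_subspace_ext (M := orth ip Z)); last exact: orth_closed.
move=> x; split => [ox s|hx z [s [y ->]]].
  apply: (ip_eq0 ipH); rewrite cc_defect_selfadj word_adjoint.
  by apply: ox; exists s, (cc_defect (word s x)).
by rewrite -word_adjoint -cc_defect_selfadj hx ip0l.
Qed.

Lemma cc_part_reduces : reduces cc_part T Ts.
Proof. by move=> x hx; split => s; [exact: (hx (true :: s)) | exact: (hx (false :: s))]. Qed.

Lemma cc_defect_eq0 M : closed_subspace ip M -> reduces M T Ts ->
  in_CC1r_on ip r M T -> forall x, M x -> cc_defect x = 0.
Proof.
move=> HM red [_ [P0 [P1 [[P0M P0lin P0P0 _] [P1M P1lin P1P1 _] P0P1 TT]]]].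
have TsT_M x : M x -> TsT x = P0 x + c2 *: P1 x.
  move=> Mx; apply/eqP; rewrite -subr_eq0; apply/eqP; apply: (orth_self ipH (Z := M)).
    apply: (subspaceB HM); first by rewrite /TsT; case: (red _ Mx) => /red[].
    by apply: (subspaceD HM); [exact: P0M | apply: (subspaceZ HM); exact: P1M].
  by move=> y My; rewrite ipBl // /TsT (adjointC ipH Tadj) TT // subrr.
have P0_P1 x : M x -> P0 (P1 x) = 0.
  move=> Mx; apply: (addIr (P1 x)); rewrite add0r -{2}(P1P1 x Mx).
  exact: P0P1 (P1M _ Mx).
have P1_P0 x : M x -> P1 (P0 x) = 0.
  move=> Mx; apply: (addrI (P0 x)); rewrite addr0 -{1}(P0P0 x Mx).
  exact: P0P1 (P0M _ Mx).
move=> x Mx; rewrite /cc_defect (TsT_M x Mx) linearD linearZ /= -[in c2 *: x](P0P1 x Mx).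
rewrite (TsT_M _ (P0M _ Mx)) (TsT_M _ (P1M _ Mx)) P0_P1 // P1_P0 // P0P0 // P1P1 //.
ip_ring ipH.
Qed.

Lemma TsT_eigen1 x : cc_defect x = 0 -> TsT (TsT x - c2 *: x) = TsT x - c2 *: x.
Proof.
move=> h; rewrite linearB linearZ /=.
by apply/eqP; rewrite -subr_eq0 -h; apply/eqP; ip_ring ipH.
Qed.

Lemma TsT_eigen_r2 x : cc_defect x = 0 -> TsT (x - TsT x) = c2 *: (x - TsT x).
Proof.
move=> h; rewrite linearB /=.
by apply/eqP; rewrite -subr_eq0 -oppr0 -h; apply/eqP; ip_ring ipH.
Qed.

Lemma cc_of_defect_eq0 M : closed_subspace ip M -> reduces M T Ts ->
  (forall x, M x -> cc_defect x = 0) -> in_CC1r_on ip r M T.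
Proof.
move=> HM red M_defect.
have TsT_M x : M x -> M (TsT x) by move=> Mx; rewrite /TsT; case: (red _ Mx) => /red[].
split; first by move=> x Mx; case: (red _ Mx).
pose c3 := ((1 - r ^+ 2)^-1)%:C%C : R[i].
(* The spectral projections of [TsT], whose spectrum on [M] lies in [{1, r^2}]. *)
exists (fun x => c3 *: (TsT x - c2 *: x)), (fun x => c3 *: (x - TsT x)); split.
- split.
  + move=> x Mx; apply: (subspaceZ HM).
    by apply: (subspaceB HM (TsT_M _ Mx)); apply: (subspaceZ HM).
  + by move=> a x y _ _; rewrite [TsT _]linearP; ip_ring ipH.
  + move=> x Mx; rewrite linearZ /= TsT_eigen1 ?M_defect //.
    by ip_ring ipH; exact: one_sub_c2_neq0.
  + move=> x y _ _; rewrite !(ipZl ipH, ipBl ipH, ipZr ipH, ipBr ipH) TsT_selfadj.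
    by rewrite !conjc_real.
- split.
  + by move=> x Mx; apply: (subspaceZ HM); apply: (subspaceB HM Mx (TsT_M _ Mx)).
  + by move=> a x y _ _; rewrite [TsT _]linearP; ip_ring ipH.
  + move=> x Mx; rewrite linearZ /= TsT_eigen_r2 ?M_defect //.
    by ip_ring ipH; exact: one_sub_c2_neq0.
  + move=> x y _ _; rewrite !(ipZl ipH, ipBl ipH, ipZr ipH, ipBr ipH) TsT_selfadj.
    by rewrite !conjc_real.
- by move=> x _; ip_ring ipH; exact: one_sub_c2_neq0.
- move=> x y _ _; rewrite Tadj -[Ts (T y)]/(TsT y) -TsT_selfadj; congr (ip _ y).
  by ip_ring ipH; exact: one_sub_c2_neq0.
Qed.

Lemma cc_part_max N : closed_subspace ip N -> reduces N T Ts ->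
  in_CC1r_on ip r N T -> subset_of N cc_part.
Proof. by move=> HN red cc x Nx s; apply: (cc_defect_eq0 HN red cc); apply: reduces_word. Qed.

Section Invariance.
Variable Q : V -> V.
Hypotheses (Qlin : linear Q) (QT : forall x, Q (T x) = T (Q x))
  (QTs : forall x, Q (Ts x) = Ts (Q x)).

HB.instance Definition _ := GRing.isLinear.Build R[i] V V *:%R Q Qlin.

Lemma cc_part_invariant x : cc_part x -> cc_part (Q x).
Proof.
have Q_word s y : Q (word s y) = word s (Q y).
  by elim: s y => [|[] s IH] y //=; rewrite IH ?QT ?QTs.
have Q_defect y : Q (cc_defect y) = cc_defect (Q y).
  by rewrite /cc_defect /TsT linearD linearB !linearZ /= !(QT, QTs).
by move=> hx s; rewrite -Q_word -Q_defect hx linear0.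
Qed.

End Invariance.

Lemma cnu_orth_cc_part N : closed_subspace ip N -> reduces N T Ts ->
  cnu_on ip r N T Ts -> forall x h, N x -> cc_part h -> ip x h = 0.
Proof.
move=> HN red [_ no_cc] x h Nx h_cc; have [P HP] := orth_proj_exists ipH HN.
have Ph_cc : cc_part (P h).
  apply: (cc_part_invariant (proj_linear ipH HN HP) _ _ h_cc).
    move=> y; exact: (proj_comm ipH HN HP Tadj red y).
  by apply: (proj_comm ipH HN HP (adjointC ipH Tadj)) => y /red[].
have Ph0 : P h = 0.
  apply: boolp.contrapT => Ph_neq0; apply: no_cc.
  exists (fun y => N y /\ cc_part y); split.
  - exact: closed_subspace_and HN cc_part_closed.
  - by move=> y [].
  - by exists (P h); split => //; split => //; exact: (proj_in HP h).
  - exact: reduces_and red cc_part_reduces.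
  - apply: cc_of_defect_eq0.
    + exact: closed_subspace_and HN cc_part_closed.
    + exact: reduces_and red cc_part_reduces.
    + by move=> y [_ /(_ [::])].
by rewrite -(proj_id ipH HN HP Nx) (proj_selfadj ipH HP) Ph0 ip0r.
Qed.

Lemma of_type_orth_cc_part M : closed_subspace ip M -> reduces M T Ts ->
  subset_of M (orth ip cc_part) -> in_C1r_on ip r M T -> of_type ip r false M T Ts.
Proof.
move=> HM red M_orth C1r; split => // -[N [HN NM [x [Nx x_neq0]] redN ccN]].
apply/x_neq0/(ip_eq0 ipH)/(M_orth _ (NM _ Nx)).
exact: cc_part_max HN redN ccN x Nx.
Qed.

Lemma of_type_cc_part M : closed_subspace ip M -> reduces M T Ts ->
  subset_of M cc_part -> in_C1r_on ip r M T -> of_type ip r true M T Ts.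
Proof.
move=> HM red M_cc C1r; split => //.
by apply: cc_of_defect_eq0 => // x /M_cc /(_ [::]).
Qed.

End SingleOperator.

Section DoublyCommuting.
Variables (R : realType) (V : lmodType R[i]) (ip : V -> V -> R[i]).
Hypothesis ipH : is_hilbert ip.
Variables (r : R) (d : nat) (T : 'I_d -> {linear V -> V}) (Ts : 'I_d -> V -> V).
Hypothesis r2_neq1 : r ^+ 2 != 1.
Hypothesis Tadj : forall i, adjoint_of ip (T i) (Ts i).
Hypothesis T_C1r : forall i, in_C1r_on ip r (fun _ => True) (T i).
Hypothesis T_comm : forall i j x, T i (T j x) = T j (T i x).
Hypothesis T_dcomm : forall i j x, i != j -> T i (Ts j x) = Ts j (T i x).
Implicit Types (i j k : 'I_d) (w : {ffun 'I_d -> bool}) (x y : V).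

Local Notation cc i := (cc_part r (T i) (Ts i)).

Lemma Ts_comm i j x : Ts i (Ts j x) = Ts j (Ts i x).
Proof. exact: (adjoint_comm ipH (Tadj i) (Tadj j) (T_comm i j) x). Qed.

Lemma cc_part_reduces_all i j : reduces (cc i) (T j) (Ts j).
Proof.
have [<-|ij] := eqVneq i j; first exact: cc_part_reduces.
move=> x x_cc; split; apply: (cc_part_invariant _ _ _ x_cc).
- exact: (adjoint_linear ipH (Tadj j)).
- by move=> y; rewrite T_comm.
- by move=> y; rewrite T_dcomm // eq_sym.
- exact: (adjoint_linear ipH (adjointC ipH (Tadj j))).
- by move=> y; rewrite T_dcomm.
- by move=> y; rewrite Ts_comm.
Qed.

Definition type_part i (b : bool) : V -> Prop := if b then cc i else orth ip (cc i).

Definition joint_part w x := forall i, type_part i (w i) x.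

Lemma type_part_closed i b : closed_subspace ip (type_part i b).
Proof. by rewrite /type_part; case: b; [exact: cc_part_closed | exact: orth_closed]. Qed.

Lemma type_part_reduces i b j : reduces (type_part i b) (T j) (Ts j).
Proof.
by rewrite /type_part; case: b; last apply: (reduces_orth ipH (Tadj j)); exact: cc_part_reduces_all.
Qed.

Lemma joint_part_closed w : closed_subspace ip (joint_part w).
Proof. by apply: closed_subspace_all => i; apply: type_part_closed. Qed.

Lemma joint_part_reduces w j : reduces (joint_part w) (T j) (Ts j).
Proof. by move=> x x_w; split => i; case: (type_part_reduces j (x_w i)). Qed.

Lemma joint_part_type w j : of_type ip r (w j) (joint_part w) (T j) (Ts j).
Proof.
have Hw := joint_part_closed w; have red := joint_part_reduces (w := w) j.
have C1r := C1r_on_reducing ipH (Tadj j) (T_C1r j) Hw red.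
have : subset_of (joint_part w) (type_part j (w j)) by move=> x /(_ j).
case: (w j) => w_j.
  exact: (of_type_cc_part ipH r2_neq1 (Tadj j) Hw red w_j C1r).
exact: (of_type_orth_cc_part ipH (Tadj j) Hw red w_j C1r).
Qed.

Lemma joint_part_orth w w' x y : w != w' -> joint_part w x -> joint_part w' y -> ip x y = 0.
Proof.
move=> /eqP w_neq x_w y_w'; have [i wi_neq] : exists i, w i != w' i.
  by apply: boolp.contrapT => /boolp.forallNP h; apply/w_neq/ffunP => i; apply/eqP/negbNE/negP/h.
move: (x_w i) (y_w' i); rewrite /type_part; case: (w i) wi_neq; case: (w' i) => // _.
  by move=> x_cc /(_ x x_cc) /(ip_eq0C ipH).
by move=> x_orth /x_orth.
Qed.

Lemma proj_type_part k P : is_orth_proj ip (cc k) P ->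
  forall i b x, type_part i b x -> type_part i b (P x).
Proof.
move=> HP i b x; have Hk := cc_part_closed ipH r (Tadj k).
have Plin := proj_linear ipH Hk HP.
have P_T y : P (T i y) = T i (P y).
  by apply: (proj_comm ipH Hk HP (Tadj i)); apply: cc_part_reduces_all.
have P_Ts y : P (Ts i y) = Ts i (P y).
  by apply: (proj_comm ipH Hk HP (adjointC ipH (Tadj i))) => z /(cc_part_reduces_all i)[].
have P_cc := cc_part_invariant Plin P_T P_Ts.
rewrite /type_part; case: b => [/P_cc //|x_orth h h_cc].
by rewrite (proj_selfadj ipH HP); apply/x_orth/P_cc.
Qed.

Lemma partial_decomposition (s : seq 'I_d) : uniq s -> forall x,
  exists g : {ffun 'I_d -> bool} -> V,
  [/\ x = \sum_w g w, forall w i, i \in s -> type_part i (w i) (g w) &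
      forall w i, i \notin s -> ~~ w i -> g w = 0].
Proof.
elim: s => [_ x|k s IH /andP[k_notin_s s_uniq] x].
  exists (fun w => if w == [ffun => true] then x else 0); split => //.
    by rewrite (bigD1 [ffun => true]) //= eqxx big1 ?addr0 // => w /negbTE ->.
  by move=> w i _; case: eqP => // ->; rewrite ffunE.
have [g [x_sum g_type g0]] := IH s_uniq x.
have [P HP] := orth_proj_exists ipH (cc_part_closed ipH r (Tadj k)).
pose flip w : {ffun 'I_d -> bool} := [ffun j => if j == k then ~~ w j else w j].
have flipK : involutive flip.
  by move=> w; apply/ffunP => j; rewrite !ffunE; case: eqP => // _; apply: negbK.
have flip_k w : flip w k = ~~ w k by rewrite ffunE eqxx.
have flip_neq w i : i != k -> flip w i = w i by move=> ik; rewrite ffunE (negbTE ik).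
(* The projection onto [cc k] splits each [g w] with [w k] true: the [cc k] part
   stays at [w], the rest moves to the index with the [k]-th bit flipped. *)
exists (fun w => if w k then P (g w) else g (flip w) - P (g (flip w))); split.
- rewrite (bigID (fun w => w k)) /= [X in _ + X](reindex_inj (inv_inj flipK)) /=.
  under [X in _ + X]eq_bigl => w do rewrite flip_k negbK.
  under [X in _ + X]eq_bigr => w wk do rewrite flipK flip_k wk /=.
  under eq_bigr => w wk do rewrite wk.
  rewrite -big_split /=; under eq_bigr => w _ do rewrite addrC subrK.
  rewrite x_sum (bigID (fun w => w k)) /= [X in _ + X]big1 ?addr0 // => w.
  exact: g0.
- move=> w i; rewrite in_cons; have [->|ik] /= := eqVneq i k => [_|i_in_s].
    rewrite /type_part; case: (w k); first exact: (proj_in HP (g w)).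
    exact: (proj_orth HP (g (flip w))).
  case: (w k); first exact/(proj_type_part HP)/g_type.
  have := g_type (flip w) i i_in_s; rewrite flip_neq // => g_i.
  exact: (subspaceB (type_part_closed i (w i)) g_i (proj_type_part HP g_i)).
- move=> w i; rewrite in_cons negb_or => /andP[ik i_notin_s] wi.
  have Hk := cc_part_closed ipH r (Tadj k); have P0 := proj_id ipH Hk HP (subspace0 Hk).
  by case: (w k); rewrite ?(g0 w i) ?(g0 (flip w) i) ?flip_neq ?P0 ?subr0.
Qed.

Lemma joint_part_orth_decomposition : orth_decomposition ip joint_part.
Proof.
split; [exact: joint_part_closed | exact: joint_part_orth |] => x.
have [g [x_sum g_type _]] := partial_decomposition (enum_uniq 'I_d) x.
by exists g; split => // w i; apply: g_type; rewrite mem_enum.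
Qed.

Lemma type_part_of_type i b M : closed_subspace ip M -> reduces M (T i) (Ts i) ->
  of_type ip r b M (T i) (Ts i) -> subset_of M (type_part i b).
Proof.
move=> HM red; rewrite /type_part; case: b => [[_ cc]|cnu].
  exact: (cc_part_max ipH (Tadj i) HM red cc).
by move=> x Mx h; apply: (cnu_orth_cc_part ipH r2_neq1 (Tadj i) HM red cnu Mx).
Qed.

Lemma joint_part_unique (Ks : {ffun 'I_d -> bool} -> V -> Prop) :
  orth_decomposition ip Ks -> (forall w i, reduces (Ks w) (T i) (Ts i)) ->
  (forall w j, of_type ip r (w j) (Ks w) (T j) (Ts j)) ->
  forall w x, Ks w x <-> joint_part w x.
Proof.
move=> Kdec Kred Ktype; have [Kcl _ _] := Kdec.
have KH w : subset_of (Ks w) (joint_part w).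
  by move=> x x_K i; apply: (type_part_of_type (Kcl w) (Kred w i) (Ktype w i) x_K).
move=> w x; split; first exact: KH.
exact: (orth_decomposition_sub ipH Kdec joint_part_closed joint_part_orth KH).
Qed.

Lemma joint_part_cc_max :
  (forall i, in_CC1r_on ip r (joint_part [ffun => true]) (T i)) /\
  forall N, closed_subspace ip N -> (forall i, reduces N (T i) (Ts i)) ->
    (forall i, in_CC1r_on ip r N (T i)) -> subset_of N (joint_part [ffun => true]).
Proof.
split=> [i|N HN red cc x Nx i].
  by have := joint_part_type [ffun => true] i; rewrite ffunE => -[].
by rewrite /type_part ffunE; apply: (cc_part_max ipH (Tadj i) HN (red i) (cc i)).
Qed.

Lemma joint_part_cnu_max :
  (forall i, cnu_on ip r (joint_part [ffun => false]) (T i) (Ts i)) /\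
  forall N, closed_subspace ip N -> (forall i, reduces N (T i) (Ts i)) ->
    (forall i, cnu_on ip r N (T i) (Ts i)) -> subset_of N (joint_part [ffun => false]).
Proof.
split=> [i|N HN red cnu x Nx i].
  by have := joint_part_type [ffun => false] i; rewrite ffunE.
rewrite /type_part ffunE => h.
exact: (cnu_orth_cc_part ipH r2_neq1 (Tadj i) HN (red i) (cnu i) Nx).
Qed.

End DoublyCommuting.

Lemma bij_ord_with_values (A : finType) n (a a' : A) (j j' : 'I_n) :
  #|A| = n -> (a == a') = (j == j') ->
  exists f : A -> 'I_n, [/\ bijective f, f a = j & f a' = j'].
Proof.
move=> cardA eq_aa'; pose e x := cast_ord cardA (enum_rank x).
have e_bij : bijective e.
  exists (fun k => enum_val (cast_ord (esym cardA) k)) => [x|k].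
    by rewrite /e cast_ordK enum_rankK.
  by rewrite /e enum_valK cast_ordKV.
pose p := tperm (e a) j; pose q := tperm (p (e a')) j'.
exists (fun x => q (p (e x))); split; last by rewrite tpermL.
  by do 2![apply: bij_comp; first exact: (injF_bij (@perm_inj _ _))].
rewrite tpermL /q; have [aa'|a_neq] := eqVneq a a'.
  move: eq_aa'; rewrite aa' eqxx => /esym/eqP jj'.
  by rewrite /p -aa' tpermL tpermL jj'.
move: eq_aa'; rewrite (negbTE a_neq) => /esym/negbT j_neq.
rewrite tpermD // 1?eq_sym //.
apply: contra a_neq => /eqP pa'; apply/eqP/(bij_inj e_bij)/(@perm_inj _ p).
by rewrite -pa' /p tpermL.
Qed.

Lemma ffun_true_false_eq d :
  ([ffun => true] == [ffun => false] :> {ffun 'I_d -> bool}) = (first_idx d == last_idx d).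
Proof.
case: d => [|d].
  rewrite (_ : first_idx 0 = last_idx 0); last exact: val_inj.
  by rewrite eqxx; apply/eqP/ffunP => -[].
have -> : ([ffun => true] == [ffun => false] :> {ffun 'I_d.+1 -> bool}) = false.
  by apply/negbTE/eqP => /ffunP/(_ ord0); rewrite !ffunE.
apply/esym/negbTE; rewrite -(inj_eq val_inj) /= eq_sym -lt0n -subn1 subn_gt0 expnS.
exact/leq_pmulr/exp2_gt0.
Qed.

Theorem theorem3p7 (R : realType) (V : lmodType R[i]) (ip : V -> V -> R[i])
    (r : R) (d : nat) (T : 'I_d -> {linear V -> V}) (Ts : 'I_d -> V -> V) :
  is_hilbert ip ->
  0 < r < 1 ->
  (forall i, adjoint_of ip (T i) (Ts i)) ->
  (forall i, in_C1r_on ip r (fun _ => True) (T i)) ->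
  (forall i j x, T i (T j x) = T j (T i x)) ->
  (forall i j x, i != j -> T i (Ts j x) = Ts j (T i x)) ->
  exists (Hs : 'I_(2 ^ d) -> V -> Prop) (sigma : {ffun 'I_d -> bool} -> 'I_(2 ^ d)),
    [/\ orth_decomposition ip Hs,
        [/\
        (* (1) joint reducing subspaces *)
        (forall j i, reduces (Hs j) (T i) (Ts i)),
        (* (2) each restriction is of type t1 or t2 *)
        (forall i j, of_type ip r true (Hs j) (T i) (Ts i) \/
                     of_type ip r false (Hs j) (T i) (Ts i)) &
        (* (3) the subspaces are labelled bijectively by Omega_d *)
        bijective sigma /\
        (forall (w : {ffun 'I_d -> bool}) (j : 'I_d),
            of_type ip r (w j) (Hs (sigma w)) (T j) (Ts j))],
        (* (4) H_1 is the maximal joint reducing subspace with all restrictions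
               in \mathcal C_{1,r} *)
        ((forall i, in_CC1r_on ip r (Hs (first_idx d)) (T i)) /\
         forall N : V -> Prop, closed_subspace ip N ->
           (forall i, reduces N (T i) (Ts i)) ->
           (forall i, in_CC1r_on ip r N (T i)) ->
           subset_of N (Hs (first_idx d))),
        (* (5) H_{2^d} is the maximal joint reducing subspace with all
               restrictions c.n.u. C_{1,r}-contractions *)
        ((forall i, cnu_on ip r (Hs (last_idx d)) (T i) (Ts i)) /\
         forall N : V -> Prop, closed_subspace ip N ->
           (forall i, reduces N (T i) (Ts i)) ->
           (forall i, cnu_on ip r N (T i) (Ts i)) ->
           subset_of N (Hs (last_idx d))) &
        (* uniqueness of the decomposition (indexed by Omega_d) *)
        (forall Ks : {ffun 'I_d -> bool} -> V -> Prop,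
           orth_decomposition ip Ks ->
           (forall (w : {ffun 'I_d -> bool}) (i : 'I_d), reduces (Ks w) (T i) (Ts i)) ->
           (forall (w : {ffun 'I_d -> bool}) (j : 'I_d), of_type ip r (w j) (Ks w) (T j) (Ts j)) ->
           forall (w : {ffun 'I_d -> bool}) (x : V), Ks w x <-> Hs (sigma w) x)].
Proof.
move=> ipH /andP[r_gt0 r_lt1] Tadj T_C1r T_comm T_dcomm.
have r2_neq1 : r ^+ 2 != 1 by rewrite lt_eqF // expr_lt1 ?ltW.
have card_w : #|{ffun 'I_d -> bool}| = (2 ^ d)%N by rewrite card_ffun card_bool card_ord.
have [sigma [[sinv sigmaK sinvK] sigma_t sigma_f]] :=
  bij_ord_with_values card_w (ffun_true_false_eq d).
have w_type := joint_part_type ipH r2_neq1 Tadj T_C1r T_comm T_dcomm.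
exists (fun j => joint_part ip r T Ts (sinv j)), sigma; split.
- apply: orth_decomposition_reindex; first by exists sigma.
  exact: (joint_part_orth_decomposition ipH r Tadj T_comm T_dcomm).
- split=> [j i|i j|]; first exact: (joint_part_reduces ipH Tadj T_comm T_dcomm).
  + by have := w_type (sinv j) i; case: (sinv j i); [left | right].
  + by split=> [|w j]; [exists sinv | rewrite sigmaK].
- rewrite -sigma_t sigmaK; exact: (joint_part_cc_max ipH r2_neq1 Tadj T_C1r T_comm T_dcomm).
- rewrite -sigma_f sigmaK; exact: (joint_part_cnu_max ipH r2_neq1 Tadj T_C1r T_comm T_dcomm).
- move=> Ks Kdec Kred Ktype w x; rewrite sigmaK.
  exact: (joint_part_unique ipH r2_neq1 Tadj Kdec Kred Ktype).
Qed.
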